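(* Assume $\mathcal I$ is $\tau$-standard. Then: (a) for every $\underline d\in\mathbb N_0^m$ there is exactly one weakly decreasing sequence $I_1\supseteq\dots\supseteq I_s$ in $\mathcal I$ (with $s\ge0$) such that $\sum_{k=1}^se_{I_k}=\underline d$; (b) for every $I\in\mathcal I$ and $d\in\mathbb N_0$, $\mathrm{LS}^+_{\lambda_I}(d)=\mathrm{LS}^+_{\underline\lambda}(d\,e_I)$, where $\mathrm{LS}^+_{\lambda_I}(d)$ denotes the set of elements of $\mathrm{LS}^+_{\underline\lambda}$ of degree $d e_I$ whose support lies in $\{(\theta,J)\in D(\underline\lambda,\tau):J=I\}$.
   Context: Let $G$ be a connected, simply-connected, simple algebraic group over an algebraically closed field of characteristic zero, $T\subseteq B$, $W$ the Weyl group, $W_\nu$ stabilizers; $W/W_{Q'}$ has the Bruhat order, $\pi_{Q_2}$ denotes projections and $\min_{Q_1},\max_{Q_1}$ minimal/maximal preimages, $\min_B(\theta)$ minimal representatives. Standing data: dominant $\lambda_1,\dots,\lambda_m$, $\underline\lambda=(\lambda_1,\dots,\lambda_m)$, $\lambda=\sum\lambda_i$, $Q=BW_\lambda B$, $\tau\in W/W_Q$. $\mathcal I$ is a set of nonempty subsets of $[m]$ ordered by inclusion, graded of length $m-1$, satisfying ( * ): $\underline J\subseteq I\Rightarrow J\subseteq I$ (with $\underline J=J$ if $J$ is minimal in $\mathcal I$, else $\underline J=\bigcup\{J\setminus K:K\in\mathcal I$ covered by $J\}$); $e_I=\sum_{i\in\underline I}e_i\in\mathbb N_0^m$, $\lambda_I=\sum_{i\in\underline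 I}\lambda_i$, $P_I=BW_{\lambda_I}B$. $\underline W(\underline\lambda,\tau)=\bigsqcup_I\{\theta\in W/W_{P_I}:\theta\le\pi_{P_I}(\tau)\}\times\{I\}$, ordered by the transitive closure of $(\theta,I)\ge(\phi,J)$ iff $I\supseteq J$ and $\max_Q(\theta)\ge\min_Q(\phi)$; a chain is $\tau$-standard if it lifts (same index sets) along $(\theta,I)\mapsto(\pi_{P_I}(\theta),I)$ to a chain in $\{\theta\in W/W_Q:\theta\le\tau\}\times\mathcal I$ (product order). $D(\underline\lambda,\tau)$ (order $\succeq$): elements lying in a lift of some maximal $\tau$-standard chain, $x\succeq y$ iff $x\ge y$ and both lie in a common such lift. $\mathcal I$ is $\tau$-standard if the projection $D(\underline\lambda,\tau)\to\underline W(\underline\lambda,\tau)$ is a poset isomorphism. Bond numbers for covering $(\theta,I)\succ(\phi,J)$: $|\langle\phi(\lambda_I),\beta^\vee\rangle|$ if $I=J$ ($\beta$ the positive root with $s_\beta\min_B(\phi)=\min_B(\theta)$), $1$ if $I\neq J$. For a maximal chain $\mathfrak C:p_r\succ\dots\succ p_0$: $\mathrm{LS}_{\mathfrak C}=\{\sum a_ie_{p_i}:b_{p_i,p_{i-1}}(a_i+\dots+a_r)\in\mathbb Z\ \forall i\in[r],\ \sum a_i\in\mathbb Z\}$; $\mathrm{LS}^+_{\underline\lambda}=\bigcup_{\mathfrak C}(\mathrm{LS}_{\mathfrak C}\cap\mathbb Q^{\mathfrak C}_{\ge0})$; $\deg e_{(\theta,I)}=e_I$ (extended linearly), and $\mathrm{LS}^+_{\underline\lambda}(\underline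 d)$ consists of elements of degree $\underline d$. *)

(* Combinatorial model of the Weyl-group data of a simple,
   simply-connected group, given by its (irreducible, finite type) Cartan matrix. *)
From HB Require Import structures.
From mathcomp Require Import all_boot all_order all_algebra.
From Stdlib Require Import Relation_Operators.
Set Implicit Arguments. Unset Strict Implicit. Unset Printing Implicit Defensive.
Import Order.TTheory GRing.Theory Num.Theory.
Local Open Scope ring_scope.

Section Weyl.
Variable l : nat.
Variable A : 'M[int]_l.

(* Weights of the simply connected group: integer coordinates w.r.t. the
   fundamental weights, i.e. (mu ord0 i) = <mu, alpha_i^vee>. *)
Definition weight := 'rV[int]_l.

(* Convention: <alpha_j, alpha_i^vee> = A i j. *)
Definition alpha (j : 'I_l) : weight := \row_k A k j.

Definition cartan_finite_irred : Prop :=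
  [/\ (0 < l)%N,
      (forall i, A i i = 2) /\
      (forall i j, i != j -> A i j <= 0),
      (forall i j, (A i j == 0) = (A j i == 0)),
      (exists d : 'I_l -> rat,
          [/\ forall i, 0 < d i,
              forall i j, d i * (A i j)%:~R = d j * (A j i)%:~R &
              forall x : 'I_l -> rat, (exists i, x i != 0) ->
                0 < \sum_i \sum_j x i * d i * (A i j)%:~R * x j]) &
      (forall S : {set 'I_l}, S != set0 -> S != setT ->
          exists i j, [/\ i \in S, j \notin S & A i j != 0])].

Definition dominant (mu : weight) := forall i, 0 <= mu ord0 i.

Definition sref (i : 'I_l) (mu : weight) : weight := mu - (mu ord0 i) *: alpha i.

(* Weyl group elements given by words; [:: i1; ..; ik] is s_i1 ... s_ik *)
Definition wact (w : seq 'I_l) (mu : weight) : weight := foldr sref mu w.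
Definition weq (u v : seq 'I_l) := forall mu, wact u mu = wact v mu.
Definition reduced (w : seq 'I_l) := forall v, weq v w -> (size w <= size v)%N.

(* Bruhat order on W (subword property) *)
Definition bruhat (u w : seq 'I_l) :=
  exists w' u', [/\ weq w' w, reduced w', subseq u' w' & weq u' u].

(* W/W_nu is identified with the orbit W.nu (theta <-> theta(nu)).
   u is a (word of) the minimal representative min_B(theta) of theta. *)
Definition isMinRep (nu th : weight) (u : seq 'I_l) :=
  wact u nu = th /\ forall v, wact v nu = th -> (size u <= size v)%N.

(* Bruhat order on W/W_nu via minimal representatives *)
Definition leW (nu th ph : weight) :=
  exists u w, [/\ isMinRep nu th u, isMinRep nu ph w & bruhat u w].

(* projection W/W_nu -> W/W_nu' (when W_nu <= W_nu'):  x |-> th *)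
Definition projR (nu nu' x th : weight) :=
  exists u, wact u nu = x /\ wact u nu' = th.

Definition posRoot (b : weight) :=
  exists c : 'I_l -> nat, b = \sum_j (c j)%:Z *: alpha j.

End Weyl.

Section Stand.
Variable l : nat.
Variable A : 'M[int]_l.
Variable m : nat.
Variable lam : 'I_m -> weight l.
Variable tau : weight l.
Variable Ical : {set {set 'I_m}}.

Definition covb (K J : {set 'I_m}) :=
  [&& K \in Ical, K \proper J &
      [forall L in Ical, ~~ ((K \proper L) && (L \proper J))]].

Definition under (J : {set 'I_m}) : {set 'I_m} :=
  if [exists K in Ical, K \proper J]
  then \bigcup_(K | covb K J) (J :\: K) else J.

Definition eI (I : {set 'I_m}) (i : 'I_m) : nat := (i \in under I).
Definition lamI (I : {set 'I_m}) : weight l := \sum_(i in under I) lam i.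
Definition lamAll : weight l := \sum_i lam i.

Definition IChain (C : {set {set 'I_m}}) :=
  C \subset Ical /\ forall X Y, X \in C -> Y \in C -> X \subset Y \/ Y \subset X.

Definition Ical_ok :=
  [/\ (forall I, I \in Ical -> I != set0),
      (* graded of length m-1: all maximal chains have m elements *)
      (forall C, IChain C -> (forall C', IChain C' -> C \subset C' -> C' = C) ->
         #|C| = m) &
      (forall I J, I \in Ical -> J \in Ical -> under J \subset I -> J \subset I)].

Definition elt := (weight l * {set 'I_m})%type.
Definition x0 : elt := (0, set0).

Definition inWu (p : elt) :=
  [/\ p.2 \in Ical, exists u, wact A u (lamI p.2) = p.1 &
      exists t, projR A lamAll (lamI p.2) tau t /\ leW A (lamI p.2) p.1 t].

Definition isPre (p : elt) (x : weight l) := projR A lamAll (lamI p.2) x p.1.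
Definition isMaxPre p x := isPre p x /\ forall y, isPre p y -> leW A lamAll y x.
Definition isMinPre p x := isPre p x /\ forall y, isPre p y -> leW A lamAll x y.

Definition Rrel (p q : elt) :=
  [/\ inWu p, inWu q, q.2 \subset p.2 &
      exists x y, [/\ isMaxPre p x, isMinPre q y & leW A lamAll y x]].

Definition geW : elt -> elt -> Prop := clos_trans elt Rrel.
Definition gtW p q := geW p q /\ p <> q.

Definition chainW (c : seq elt) :=
  [/\ uniq c, forall p, p \in c -> inWu p &
      forall p q, p \in c -> q \in c -> geW p q \/ geW q p].

(* the lift poset {x in W/W_Q : x <= tau} x Ical, product order *)
Definition inLiftSet (a : elt) :=
  [/\ a.2 \in Ical, exists u, wact A u lamAll = a.1 & leW A lamAll a.1 tau].
Definition geP (a b : elt) := leW A lamAll b.1 a.1 /\ b.2 \subset a.2.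
Definition chainP (c : seq elt) :=
  [/\ uniq c, forall a, a \in c -> inLiftSet a &
      forall a b, a \in c -> b \in c -> geP a b \/ geP b a].

Definition isProj (a p : elt) := a.2 = p.2 /\ projR A lamAll (lamI a.2) a.1 p.1.

Definition liftOf (c' c : seq elt) :=
  [/\ chainP c', size c' = size c &
      forall k, (k < size c)%N -> isProj (nth x0 c' k) (nth x0 c k)].

Definition stdChain c := chainW c /\ exists c', liftOf c' c.
Definition maxStd c :=
  stdChain c /\ forall c', stdChain c' -> {subset c <= c'} -> {subset c' <= c}.

Definition inD (a : elt) := exists c c', [/\ maxStd c, liftOf c' c & a \in c'].
Definition succD (a b : elt) :=
  geP a b /\ exists c c', [/\ maxStd c, liftOf c' c, a \in c' & b \in c'].

(* Ical is tau-standard: projection D -> underline-W is a poset isomorphism *)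
Definition tauStandard :=
  [/\ (forall a, inD a -> exists p, isProj a p /\ inWu p),
      (forall p, inWu p -> exists a, inD a /\ isProj a p),
      (forall a b p, inD a -> inD b -> isProj a p -> isProj b p -> a = b) &
      (forall a b p q, inD a -> inD b -> isProj a p -> isProj b q ->
          (succD a b <-> geW p q))].

Definition bondR (p q : elt) (b : int) :=
  if p.2 == q.2 then
    exists w i u v,
      [/\ isMinRep A (lamI p.2) p.1 u, isMinRep A (lamI q.2) q.1 v,
          posRoot A (wact A w (alpha A i)),
          weq A (w ++ i :: rev w ++ v) u &
          b = `|(wact A (rev w) q.1) ord0 i| ]
  else b = 1.

(* maximal chains of underline-W, listed decreasingly p_r > ... > p_0 *)
Definition maxChainW (c : seq elt) :=
  [/\ chainW c,
      (forall j k, (j < k < size c)%N -> gtW (nth x0 c j) (nth x0 c k)) &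
      forall c', chainW c' -> {subset c <= c'} -> {subset c' <= c}].

Definition isInt (x : rat) := x \is a Num.int.

(* f : formal Q-linear combination sum_p f(p) e_p, lying in LS_c cap Q^c_{>=0} *)
Definition LSchain (c : seq elt) (f : elt -> rat) :=
  [/\ maxChainW c,
      (forall p, p \notin c -> f p = 0),
      (forall p, p \in c -> 0 <= f p),
      (forall k, (k.+1 < size c)%N -> exists b, bondR (nth x0 c k) (nth x0 c k.+1) b /\
          isInt (b%:~R * \sum_(j < k.+1) f (nth x0 c j))) &
      isInt (\sum_(p <- c) f p)].

Definition degree (c : seq elt) (f : elt -> rat) (i : 'I_m) : rat :=
  \sum_(p <- c) f p * (eI p.2 i)%:R.

Definition LSdeg (d : 'I_m -> nat) (f : elt -> rat) :=
  exists c, LSchain c f /\ forall i, degree c f i = (d i)%:R.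

End Stand.

(* Gradedness forces every maximal chain of [Ical] to contain a set of each size 1, ..., m,
   so minimal members are singletons and coverings add a single element. Hence every
   nonempty S is sandwiched, [under I ⊆ S ⊆ I], by the smallest I in [Ical] containing S,
   and condition ( * ) makes such an I unique. Part (a): subtract e_I for the I sandwiching
   the support of d and recurse; conversely the head of a decreasing decomposition
   sandwiches the support of its sum, so it is determined by d. Part (b): if an LS-path of
   degree d e_I had support outside the index I, the largest index outside I carrying weight
   would sandwich the support of a multiple of e_I, namely [under I], hence equal I. *)

From HB Require Import structures.
From mathcomp Require Import all_boot all_order all_algebra.
Import Order.TTheory GRing.Theory Num.Theory.

Set Implicit Arguments.
Unset Strict Implicit.
Unset Printing Implicit Defensive.

Local Open Scope ring_scope.

Lemma exists_max_comparable (T : finType) (s : seq {set T}) (X0 : {set T}) :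
    X0 \in s -> {in s &, forall X Y : {set T}, (X \subset Y) || (Y \subset X)} ->
  exists2 M, M \in s & {in s, forall X : {set T}, X \subset M}.
Proof.
move=> X0s comp; have [M Ms maxM] := @arg_maxnP _ X0 (mem s) (fun X => #|X|) X0s.
exists M => // X Xs; case/orP: (comp X M Xs Ms) => // sMX.
by have /eqP <- : M == X by rewrite eqEcard sMX; exact: maxM.
Qed.

Lemma card_set_le (m : nat) (X : {set 'I_m}) : (#|X| <= m)%N.
Proof. by rewrite -[X in (_ <= X)%N]card_ord max_card. Qed.

Lemma under_sub (m : nat) (Ical : {set {set 'I_m}}) J : under Ical J \subset J.
Proof. by rewrite /under; case: ifP => // _; apply/bigcupsP => K _; apply: subsetDl. Qed.

Section IcalStructure.
Variables (m : nat) (Ical : {set {set 'I_m}}).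
Hypothesis Ical_neq0 : forall I, I \in Ical -> I != set0.
Hypothesis Ical_graded : forall C, IChain Ical C ->
  (forall C', IChain Ical C' -> C \subset C' -> C' = C) -> #|C| = m.

Definition chainb (C : {set {set 'I_m}}) :=
  (C \subset Ical) && [forall X in C, forall Y in C, (X \subset Y) || (Y \subset X)].

Lemma chainbP C : reflect (IChain Ical C) (chainb C).
Proof.
apply: (iffP andP) => -[CI comp]; split=> //.
  move=> X Y XC YC.
  by move/forall_inP/(_ X XC)/forall_inP/(_ Y YC)/orP: comp.
apply/forall_inP => X XC; apply/forall_inP => Y YC.
by case: (comp X Y XC YC) => ->; rewrite ?orbT.
Qed.

Lemma exists_comparable_of_card C v : IChain Ical C -> (0 < v <= m)%N ->
  exists X, [/\ X \in Ical, #|X| = v &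
                {in C, forall Y : {set 'I_m}, (X \subset Y) || (Y \subset X)}].
Proof.
move=> /chainbP chC v_range.
have := @arg_maxnP _ C (fun D => chainb D && (C \subset D)) (fun D => #|D|).
rewrite chC subxx => /(_ isT) [D /andP[/chainbP chD sCD] maxD].
have cardD : #|D| = m.
  apply: Ical_graded chD _ => D' chD' sDD'; apply/eqP.
  rewrite eq_sym eqEcard sDD'; apply: maxD.
  by apply/andP; split; [apply/chainbP | apply: subset_trans sCD sDD'].
case: chD => DI compD.
have card_inj : {in enum D &, injective (fun X : {set 'I_m} => #|X|)}.
  move=> X Y; rewrite !mem_enum => XD YD /= eqXY; apply/eqP.
  by case: (compD X Y XD YD) => sXY; [|rewrite eq_sym]; rewrite eqEcard sXY eqXY leqnn.
pose cards := [seq #|X| | X : {set 'I_m} <- enum D].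
have [_ cardsE] : (size cards = size (iota 1 m)) * (cards =i iota 1 m).
  apply: uniq_min_size.
  - by rewrite map_inj_in_uniq ?enum_uniq.
  - move=> _ /mapP[X XD ->]; rewrite mem_enum in XD.
    rewrite mem_iota add1n ltnS card_gt0 Ical_neq0 ?(subsetP DI) //.
    exact: card_set_le.
  - by rewrite size_map -cardE cardD size_iota.
have /mapP[X] : v \in cards by rewrite cardsE mem_iota add1n ltnS.
rewrite mem_enum => XD ->; exists X; split; [exact: (subsetP DI) | by [] |].
by move=> Y /(subsetP sCD) YD; case: (compD X Y XD YD) => ->; rewrite ?orbT.
Qed.

Lemma IChain_pair K J : K \in Ical -> J \in Ical -> K \subset J -> IChain Ical [set K; J].
Proof.
move=> KI JI KJ; split; first by apply/subsetP => X; rewrite !inE => /orP[]/eqP->.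
by move=> X Y; rewrite !inE => /orP[]/eqP-> /orP[]/eqP->; rewrite ?subxx ?KJ; auto.
Qed.

Lemma setT_in_Ical : (0 < m)%N -> setT \in Ical.
Proof.
move=> m_gt0; have chain0 : IChain Ical set0 by split=> [|X Y]; rewrite ?sub0set ?inE.
have := exists_comparable_of_card chain0 (v := m).
rewrite m_gt0 leqnn => /(_ isT) [X [XI cardX _]].
by have -> : setT = X by apply/eqP; rewrite eq_sym eqEcard subsetT cardsT card_ord cardX leqnn.
Qed.

Lemma card_le1_of_minimal J :
  J \in Ical -> ~~ [exists K in Ical, K \proper J] -> (#|J| <= 1)%N.
Proof.
move=> JI noK; rewrite leqNgt; apply/negP => J_gt1.
have := exists_comparable_of_card (IChain_pair JI JI (subxx J)) (v := 1).
rewrite (leq_trans (ltnW J_gt1) (card_set_le J)) => /(_ isT) [X [XI cardX compX]].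
case/orP: (compX J (setU11 _ _)) => [sXJ | sJX].
  by case/negP: noK; apply/existsP; exists X; rewrite XI properEcard sXJ cardX.
by have := subset_leq_card sJX; rewrite cardX leqNgt J_gt1.
Qed.

Lemma card_cover_le1 K J : J \in Ical -> covb Ical K J -> (#|J :\: K| <= 1)%N.
Proof.
move=> JI /and3P[KI KJ /forall_inP noL].
rewrite cardsD (setIidPr (proper_sub KJ)) leqNgt ltn_subRL addn1; apply/negP => J_big.
have := exists_comparable_of_card (IChain_pair KI JI (proper_sub KJ)) (v := #|K|.+1).
rewrite (leq_trans (ltnW J_big) (card_set_le J)) => /(_ isT) [X [XI cardX compX]].
have KX : K \proper X.
  case/orP: (compX K (setU11 _ _)) => sKX; last by rewrite properEcard sKX cardX ltnSn.
  by have := subset_leq_card sKX; rewrite cardX ltnn.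
have XJ : X \proper J.
  case/orP: (compX J (setU1r K (set11 J))) => sXJ; first by rewrite properEcard sXJ cardX.
  by have := subset_leq_card sXJ; rewrite cardX leqNgt J_big.
by have := noL X XI; rewrite KX XJ.
Qed.

Lemma under_neq0 J : J \in Ical -> under Ical J != set0.
Proof.
move=> JI; rewrite /under; case: ifP => [/existsP[K0 /andP[K0I K0J]] | _]; last exact: Ical_neq0.
have := @arg_maxnP _ K0 (fun K => (K \in Ical) && (K \proper J)) (fun K => #|K|).
rewrite K0I K0J => /(_ isT) [K /andP[KI KJ] maxK].
have covK : covb Ical K J.
  rewrite /covb KI KJ; apply/forall_inP => L LI; apply/negP => /andP[KL LJ].
  by move: (maxK L); rewrite LI LJ => /(_ isT) /=; rewrite leqNgt (proper_card KL).
have [j jJK] : exists j, j \in J :\: K.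
  by apply/set0Pn; rewrite setD_eq0; apply: contraTN KJ => JK; rewrite properE JK andbF.
by apply/set0Pn; exists j; apply: (subsetP (bigcup_sup K covK)).
Qed.

Lemma exists_Ical_sandwich S : S != set0 ->
  exists I, [/\ I \in Ical, under Ical I \subset S & S \subset I].
Proof.
move=> S_neq0; have m_gt0 : (0 < m)%N.
  by case/set0Pn: S_neq0 => -[i i_lt_m] _; apply: leq_ltn_trans i_lt_m.
have := @arg_minnP _ setT (fun I => (I \in Ical) && (S \subset I)) (fun I => #|I|).
rewrite setT_in_Ical // subsetT => /(_ isT) [I /andP[II SI] minI].
exists I; split=> //; rewrite /under; case: ifP => [_ | /negbT noK].
  apply/bigcupsP => K covK; apply/subsetP => j /[dup] jIK /setDP[jI jK].
  apply/negPn/negP => jS; have [KI KprI _] := and3P covK.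
  have SK : S \subset K.
    apply/subsetP => x xS; apply/negPn/negP => xK.
    have xIK : x \in I :\: K by rewrite inE xK (subsetP SI).
    have xj := card_le1_eqP (card_cover_le1 II covK) x j xIK jIK.
    by move: jS; rewrite xj xS.
  by move: (minI K); rewrite KI SK => /(_ isT) /=; rewrite leqNgt (proper_card KprI).
have /eqP -> // : S == I.
by rewrite eqEcard SI (leq_trans (card_le1_of_minimal II noK)) // card_gt0.
Qed.

Hypothesis Ical_star :
  forall I J, I \in Ical -> J \in Ical -> under Ical J \subset I -> J \subset I.

Lemma Ical_eq_of_sandwich X Y (S : {set 'I_m}) : X \in Ical -> Y \in Ical ->
  under Ical X \subset S -> S \subset X -> under Ical Y \subset S -> S \subset Y -> X = Y.
Proof.
move=> XI YI uXS SX uYS SY; apply/eqP.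
by rewrite eqEsubset (Ical_star YI XI (subset_trans uXS SY))
  (Ical_star XI YI (subset_trans uYS SX)).
Qed.

Definition under_union (s : seq {set 'I_m}) : {set 'I_m} := \bigcup_(X <- s) under Ical X.

Lemma mem_under_union i s : (i \in under_union s) = has (fun X => i \in under Ical X) s.
Proof. by rewrite /under_union bigcup_seq; apply/bigcupP/hasP => -[X]; exists X. Qed.

Lemma under_sub_union X s : X \in s -> under Ical X \subset under_union s.
Proof. by move=> Xs; apply/subsetP => i iX; rewrite mem_under_union; apply/hasP; exists X. Qed.

Lemma under_union_sub (M : {set 'I_m}) (s : seq {set 'I_m}) :
  {in s, forall X : {set 'I_m}, X \subset M} -> under_union s \subset M.
Proof.
move=> sM; apply/subsetP => i; rewrite mem_under_union => /hasP[X Xs iX].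
exact: subsetP (sM X Xs) _ (subsetP (under_sub _ _) _ iX).
Qed.

Definition sum_eI (s : seq {set 'I_m}) (i : 'I_m) : nat := \sum_(I <- s) eI Ical I i.

Lemma sum_eI_gt0 s i : (0 < sum_eI s i)%N = (i \in under_union s).
Proof.
by rewrite lt0n sum_nat_seq_neq0 mem_under_union; apply: eq_has => X; rewrite /eI eqb0 negbK.
Qed.

Lemma psum_eI_neq0 (R : numDomainType) (T : eqType) (c : seq T) (P : pred T)
    (g : T -> {set 'I_m}) (f : T -> R) i : {in c, forall p, 0 <= f p} ->
  (\sum_(p <- c | P p) f p * (eI Ical (g p) i)%:R != 0) =
  (i \in under_union [seq g p | p <- c & P p && (f p != 0)]).
Proof.
move=> f_ge0; rewrite big_seq_cond psumr_eq0 => [|p /andP[pc _]]; last first.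
  by rewrite mulr_ge0 ?ler0n ?f_ge0.
rewrite -has_predC mem_under_union has_map !has_count count_filter -!has_count.
apply: eq_in_has => p pc /=.
rewrite pc negb_imply mulf_eq0 pnatr_eq0 /eI eqb0 negb_or negbK.
by case: (P p); case: (f p == 0); case: (i \in under Ical (g p)).
Qed.

Local Notation supset := (fun X Y : {set 'I_m} => Y \subset X).

Lemma supset_trans : transitive supset.
Proof. by move=> Y X Z XY YZ; apply: subset_trans XY. Qed.

Lemma sorted_supset_head X s :
  sorted supset (X :: s) -> {in X :: s, forall Y : {set 'I_m}, Y \subset X}.
Proof.
move=> /(order_path_min supset_trans)/allP Xs Y.
by rewrite inE => /orP[/eqP-> | /Xs //]; apply: subxx.
Qed.

Lemma exists_eI_decomposition d : exists s,
  [/\ all (fun I => I \in Ical) s, sorted supset s & forall i, sum_eI s i = d i].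
Proof.
have [n] := ubnP (\sum_i d i)%N; elim: n d => // n IH d d_lt.
have [S0 | S_neq0] := eqVneq [set i | (0 < d i)%N] set0.
  exists [::]; split=> // i; rewrite /sum_eI big_nil.
  by move/setP/(_ i): S0; rewrite !inE lt0n => /negbFE/eqP.
have [I0 [I0I uI0S SI0]] := exists_Ical_sandwich S_neq0.
have eI_le i : (eI Ical I0 i <= d i)%N.
  by rewrite /eI; case: (boolP (i \in _)) => // /(subsetP uI0S); rewrite inE.
pose d' i := (d i - eI Ical I0 i)%N.
have d'_lt : (\sum_i d' i < n)%N.
  rewrite ltnS in d_lt; apply: leq_trans _ d_lt; have [i0 i0I0] := set0Pn _ (under_neq0 I0I).
  rewrite [X in (_ < X)%N](eq_bigr (fun i => d' i + eI Ical I0 i)%N) => [|i _]; last first.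
    by rewrite subnK.
  by rewrite big_split /= -[X in (X < _)%N]addn0 ltn_add2l (bigD1 i0) //= /eI i0I0.
have [s [sI s_sorted sd']] := IH d' d'_lt.
have s_sub : {in s, forall X : {set 'I_m}, X \subset I0}.
  move=> X Xs; apply: Ical_star (allP sI X Xs) _ => //; apply/subsetP => i iX.
  have d'_pos : (0 < d' i)%N by rewrite -sd' sum_eI_gt0 (subsetP (under_sub_union Xs)).
  by apply: (subsetP SI0); rewrite inE (leq_trans d'_pos (leq_subr _ _)).
exists (I0 :: s); split.
- by rewrite /= I0I.
- by rewrite /= (path_sortedE supset_trans) s_sorted andbT; apply/allP.
- by move=> i; rewrite /sum_eI big_cons -/(sum_eI s i) sd' subnKC.
Qed.

Lemma eI_decomposition_uniq s t :
    all (fun I => I \in Ical) s -> sorted supset s ->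
    all (fun I => I \in Ical) t -> sorted supset t ->
  sum_eI s =1 sum_eI t -> s = t.
Proof.
have head_pos X r i : i \in under Ical X -> (0 < sum_eI (X :: r) i)%N.
  by move=> iX; rewrite sum_eI_gt0 (subsetP (under_sub_union (mem_head X r))).
elim: s t => [|X s IH] [|Y t] //=.
- move=> _ _ /andP[YI _] _ st; have [i iY] := set0Pn _ (under_neq0 YI).
  by move: (head_pos Y t i iY); rewrite -st /sum_eI big_nil.
- move=> /andP[XI _] _ _ _ st; have [i iX] := set0Pn _ (under_neq0 XI).
  by move: (head_pos X s i iX); rewrite st /sum_eI big_nil.
move=> /andP[XI sI] s_sorted /andP[YI tI] t_sorted st.
have unionE : under_union (X :: s) = under_union (Y :: t).
  by apply/setP => i; rewrite -!sum_eI_gt0 st.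
have XY : X = Y.
  apply: (Ical_eq_of_sandwich XI YI (under_sub_union (mem_head X s))
           (under_union_sub (sorted_supset_head s_sorted))).
    by rewrite unionE; apply: under_sub_union (mem_head Y t).
  by rewrite unionE; apply: under_union_sub (sorted_supset_head t_sorted).
rewrite XY in st *; congr (_ :: _); apply: IH => //.
- exact: path_sorted s_sorted.
- exact: path_sorted t_sorted.
by move=> i; move: (st i); rewrite /sum_eI !big_cons => /addnI.
Qed.

Lemma chain_eI_combination_support (R : numDomainType) (T : eqType) (c : seq T)
    (g : T -> {set 'I_m}) (f : T -> R) (I : {set 'I_m}) (r : R) :
    I \in Ical -> {in c, forall p, g p \in Ical} ->
    {in c &, forall p q, (g p \subset g q) || (g q \subset g p)} ->
    {in c, forall p, 0 <= f p} ->
    (forall i, \sum_(p <- c) f p * (eI Ical (g p) i)%:R = r * (eI Ical I i)%:R) ->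
  {in c, forall p, f p != 0 -> g p = I}.
Proof.
move=> II gI g_comp f_ge0 deg p pc fp; apply/eqP; apply: contraT => gpI.
pose s := [seq g q | q <- c & (g q != I) && (f q != 0)].
have gps : g p \in s by apply/mapP; exists p; rewrite // mem_filter gpI fp.
have sP X : X \in s -> exists2 q, q \in c & X = g q /\ g q != I.
  by case/mapP=> q; rewrite mem_filter => /andP[/andP[qI _] qc] ->; exists q.
have [M Ms maxM] : exists2 M, M \in s & {in s, forall X : {set 'I_m}, X \subset M}.
  apply: exists_max_comparable gps _ => _ _ /sP[q qc [-> _]] /sP[q' q'c [-> _]].
  exact: g_comp.
have [q qc [Mq MI]] := sP M Ms.
pose F := \sum_(q <- c | g q == I) f q.
have degE i :
    \sum_(q <- c | g q != I) f q * (eI Ical (g q) i)%:R = (r - F) * (eI Ical I i)%:R.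
  have FE : \sum_(q <- c | g q == I) f q * (eI Ical (g q) i)%:R = F * (eI Ical I i)%:R.
    by rewrite /F big_distrl; apply: eq_bigr => q' /eqP ->.
  by rewrite mulrBl -deg [in RHS](bigID (fun q => g q == I)) /= FE addrC addrK.
pose S := [set i | (r - F) * (eI Ical I i)%:R != 0].
have SE : S = under_union s by apply/setP => i; rewrite inE -degE psum_eI_neq0.
have uMS : under Ical M \subset S by rewrite SE; apply: under_sub_union.
have SM : S \subset M by rewrite SE; apply: under_union_sub.
have MI' : M \in Ical by rewrite Mq gI.
have SI : S \subset I.
  apply/subsetP => i; rewrite inE mulf_eq0 negb_or pnatr_eq0 /eI eqb0 negbK => /andP[_ iI].
  exact: subsetP (under_sub _ _) _ iI.
have uIS : under Ical I \subset S.
  have [i0 /(subsetP uMS)] := set0Pn _ (under_neq0 MI').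
  rewrite inE mulf_eq0 negb_or => /andP[rF _].
  by apply/subsetP => i iI; rewrite inE mulf_eq0 negb_or rF /eI iI pnatr_eq0.
by move: MI; rewrite -Mq (Ical_eq_of_sandwich MI' II uMS SM uIS SI) eqxx.
Qed.
End IcalStructure.

Lemma geW_sub (l : nat) (A : 'M[int]_l) (m : nat) (lam : 'I_m -> weight l) (tau : weight l)
    (Ical : {set {set 'I_m}}) (p q : elt l m) :
  geW A lam tau Ical p q -> q.2 \subset p.2.
Proof. by elim=> [x y [_ _ //] | x y z _ yx _ zy]; apply: subset_trans zy yx. Qed.

Theorem mainTheorem16 (l : nat) (A : 'M[int]_l) (m : nat)
    (lam : 'I_m -> weight l) (tau : weight l) (Ical : {set {set 'I_m}}) :
  cartan_finite_irred A ->
  (forall i, dominant (lam i)) ->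
  (exists u, wact A u (lamAll lam) = tau) ->
  Ical_ok Ical ->
  tauStandard A lam tau Ical ->
  (forall d : 'I_m -> nat,
     exists! s : seq {set 'I_m},
       [/\ all (fun I : {set 'I_m} => I \in Ical) s,
           sorted (fun X Y : {set 'I_m} => Y \subset X) s &
           forall i, (\sum_(I <- s) eI Ical I i)%N = d i]) /\
  (forall (I : {set 'I_m}) (d : nat), I \in Ical ->
     forall f : elt l m -> rat,
       (LSdeg A lam tau Ical (fun i => (d * eI Ical I i)%N) f /\
        (forall p, f p != 0 -> inWu A lam tau Ical p /\ p.2 = I))
       <-> LSdeg A lam tau Ical (fun i => (d * eI Ical I i)%N) f).
Proof.
move=> _ _ _ [Ical_neq0 Ical_graded Ical_star] _; split.
  move=> d.
  have [s [sI s_sorted sd]] := exists_eI_decomposition Ical_neq0 Ical_graded Ical_star d.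
  exists s; split=> // t [tI t_sorted td].
  by apply: (eI_decomposition_uniq Ical_neq0 Ical_star) => // i; rewrite sd -td.
move=> I d II f; split=> [[] // | fdeg]; split=> // p fp.
have [c [[[[_ cW c_comp] _ _] f_out f_ge0 _ _] cdeg]] := fdeg.
have pc : p \in c by apply: contraNT fp => /f_out ->.
split; first exact: cW.
apply: (chain_eI_combination_support Ical_neq0 Ical_star (c := c) (r := d%:R)) pc fp => //.
- by move=> q /cW[].
- by move=> q q' qc q'c; case: (c_comp q q' qc q'c) => /geW_sub ->; rewrite ?orbT.
- by move=> i; rewrite -[LHS]/(degree Ical c f i) cdeg natrM.
Qed.
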